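(* Let $n\ge 2$ be even, let $0 < l_1 < l_2 < \cdots < l_t$ be integers, and let $\tau = (1,2,\dots,l_1)(l_1+1,\dots,l_2)\cdots(l_{t-1}+1,\dots,l_t) \in S_{l_t+3n-3}$. Then for every sequence of integers $1 \le a_1 < a_2 < \cdots < a_{l_t} \le l_t+3n-3$, the permutation $(a_1,\dots,a_{l_1})(a_{l_1+1},\dots,a_{l_2})\cdots(a_{l_{t-1}+1},\dots,a_{l_t})$ can be obtained from $\tau$ by successive conjugation by $n$-crossing permutations over $S_{l_t+3n-3}$; that is, it equals $g\tau g^{-1}$ for some $g$ that is a product of $n$-crossing permutations over $S_{l_t+3n-3}$.
   Context: For integers $2\le n\le m$ and $1 \le j \le m-n+1$, the $n$-crossing permutation $\pi_j\in S_m$ is $\pi_j=(j,\,j+n-1)(j+1,\,j+n-2)\cdots$, i.e. the involution sending $i \mapsto 2j+n-1-i$ for $j\le i\le j+n-1$ and fixing all other elements of $\{1,\dots,m\}$. The $n$-crossing permutations over $S_m$ are $\pi_1,\dots,\pi_{m-n+1}$. *)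

From mathcomp Require Import all_boot all_order all_fingroup.
From mathcomp Require Import zify.
Set Implicit Arguments. Unset Strict Implicit. Unset Printing Implicit Defensive.

(* Points {1,...,m} of the paper are represented by the ordinals 'I_m,
   point k (1-based) being the ordinal k-1. *)

Definition cyc_fun (T : finType) (s : seq T) (x : T) : T :=
  if uniq s then next s x else x.

Lemma cyc_fun_inj (T : finType) (s : seq T) : injective (cyc_fun s).
Proof.
rewrite /cyc_fun; case U: (uniq s); last by [].
exact: can_inj (prev_next U).
Qed.

Definition cyc (T : finType) (s : seq T) : {perm T} := perm (@cyc_fun_inj T s).

(* Given block ends l = [l_1; ...; l_t] and a sequence a = [a_1; ...; a_(l_t)],
   the product of disjoint cycles
   (a_1 ... a_(l_1)) (a_(l_1+1) ... a_(l_2)) ... (a_(l_(t-1)+1) ... a_(l_t)). *)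
Definition block (l : seq nat) (j : nat) {T : Type} (a : seq T) : seq T :=
  let lo := nth 0 (0 :: l) j in
  let hi := nth 0 l j in
  take (hi - lo) (drop lo a).

Definition cycprod (T : finType) (l : seq nat) (a : seq T) : {perm T} :=
  \prod_(j < size l) cyc (block l j a).

Definition tau (m : nat) (l : seq nat) : {perm 'I_m} :=
  cycprod l (take (last 0 l) (enum 'I_m)).

(* The n-crossing permutation pi_j (0-based j, i.e. paper's pi_(j+1)):
   i |-> 2j+n-1-i for j <= i <= j+n-1 (0-based), other points fixed. *)
Definition cross_fun (m n j : nat) (i : 'I_m) : 'I_m :=
  if (j <= i) && (i < j + n) && (j + n <= m) then insubd i (2 * j + n - 1 - i)
  else i.

Lemma cross_funK (m n j : nat) : involutive (@cross_fun m n j).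
Proof.
move=> i; rewrite /cross_fun.
case C: ((j <= i) && (i < j + n) && (j + n <= m)); last by rewrite C.
have lt : 2 * j + n - 1 - i < m.
  move/andP: C => [/andP [h1 h2] h3]; lia.
set k : 'I_m := insubd i (2 * j + n - 1 - i).
have E : val k = 2 * j + n - 1 - i by rewrite /k val_insubd lt.
have C' : (j <= k) && (k < j + n) && (j + n <= m).
  rewrite E; move/andP: C => [/andP [h1 h2] h3]; apply/andP; split; first (apply/andP; split); lia.
rewrite C'; apply: val_inj; rewrite val_insubd E.
move/andP: C => [/andP [h1 h2] h3].
rewrite E; have -> : 2 * j + n - 1 - (2 * j + n - 1 - i) = nat_of_ord i by lia.
by rewrite ltn_ord.
Qed.

Definition crossing (m n j : nat) : {perm 'I_m} :=
  perm (inv_inj (@cross_funK m n j)).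

Definition crossings (m n : nat) : {set {perm 'I_m}} :=
  [set crossing m n j | j : 'I_m & j + n <= m].

From mathcomp Require Import all_boot all_order all_fingroup.
From mathcomp Require Import alt primitive_action.
From mathcomp Require Import zify.
Set Implicit Arguments. Unset Strict Implicit. Unset Printing Implicit Defensive.

(* For even n, the product pi_j pi_(j+1) of two consecutive crossings rotates
   the window [j, j+n] by two places; as the window has odd length n+1, a power
   of it rotates the window by one.  The quotient of two neighbouring window
   rotations is a 3-cycle, and conjugating it by a window rotation or by a
   crossing gives every 3-cycle of three consecutive points (here the length
   m = l_t + 3n - 3 >= 2n is used).  These 3-cycles generate the alternating
   group, so the crossings generate a group containing Alt_m.  Since Alt_m is
   (m-2)-transitive and l_t <= m - 2, some even g sends 1, ..., l_t to
   a_1, ..., a_(l_t) in order, and conjugating tau by g relabels its cycles. *)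

Local Open Scope group_scope.

Lemma conjg_of_mulg_eq (gT : finGroupType) (s u v : gT) : s * u = v * s -> u = v ^ s.
Proof. by move=> E; rewrite conjgE -E mulKg. Qed.

Lemma Alt_subset_of_tpermM (T : finType) (H : {group {perm T}}) (x0 y0 : T) :
  (forall x y : T, x != y -> tperm x y * tperm x0 y0 \in H) -> 'Alt_T \subset H.
Proof.
set t0 := tperm x0 y0 => tt0H.
have t0tH x y : x != y -> t0 * tperm x y \in H.
  by move=> nxy; rewrite -[_ * _]invgK invMg !tpermV groupV tt0H.
have prodH ts : all dpair ts ->
    (\prod_(u <- ts) tperm u.1 u.2) * t0 ^+ odd (size ts) \in H.
  elim/last_ind: ts => [|ts u IHts]; first by rewrite big_nil mul1g group1.
  rewrite all_rcons big_rcons size_rcons /= => /andP[du /IHts].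
  case: (odd (size ts)); rewrite /= ?expg1 ?expg0 ?mulg1 => prodH.
    have -> : tperm u.1 u.2 = t0 * (t0 * tperm u.1 u.2) by rewrite mulgA tperm2 mul1g.
    by rewrite mulgA groupM ?t0tH.
  by rewrite -mulgA groupM ?tt0H.
apply/subsetP => s; rewrite Alt_even => even_s.
have [ts def_s dts] := prod_tpermP s.
by have := prodH ts dts; rewrite -odd_perm_prod // -def_s (negbTE even_s) mulg1.
Qed.

Section AltFromAdjacentThreeCycles.
Variables (m : nat) (H : {group {perm 'I_m.+1}}).
Local Notation t i := (tperm (inord i : 'I_m.+1) (inord i.+1)).
Hypothesis adj3H : forall k, k.+2 <= m -> t k * t k.+1 \in H.

Lemma adj_tpermM_mem i j : i < m -> j < m -> t i * t j \in H.
Proof.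
wlog le_ij : i j / i <= j => [W im jm|_ jm].
  case: (leqP i j) => [|/ltnW] ?; first exact: W.
  by rewrite -[_ * _]invgK invMg !tpermV groupV W.
move: jm; rewrite -(subnKC le_ij); elim: (j - i) => [|d IHd] lt_m.
  by rewrite addn0 tperm2 group1.
have -> : t i * t (i + d.+1) = t i * t (i + d) * (t (i + d) * t (i + d).+1).
  by rewrite addnS -mulgA (mulgA (t (i + d))) tperm2 mul1g.
rewrite groupM ?IHd ?adj3H //; lia.
Qed.

Lemma tpermM_adj0_mem (x y : 'I_m.+1) : x != y -> tperm x y * t 0 \in H.
Proof.
wlog lt_xy : x y / x < y => [W nxy|_].
  case: (ltngtP x y) => [lt_xy|gt_xy|/val_inj eq_xy]; first exact: W.
    by rewrite tpermC W // eq_sym.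
  by rewrite eq_xy eqxx in nxy.
suff: forall d, x.+1 + d <= m -> tperm x (inord (x.+1 + d)) * t 0 \in H.
  by move=> /(_ (y - x.+1)); rewrite subnKC // inord_val; apply; rewrite -ltnS.
elim=> [|d IHd] le_m.
  by rewrite addn0 -{1}(inord_val x) adj_tpermM_mem //; lia.
rewrite addnS; set z := x.+1 + d.
have x_neq i : x < i <= m -> (inord i != x).
  by move=> lt_i; rewrite -val_eqE /= inordK; lia.
have -> : tperm x (inord z.+1) = tperm x (inord z) ^ t z.
  by rewrite tpermJ tpermL tpermD // x_neq //; lia.
have -> : tperm x (inord z) ^ t z * t 0 =
    (t z * t 0) * (t 0 * tperm x (inord z)) * (t z * t 0).
  by rewrite /conjg tpermV !mulgA -(mulgA _ (t 0) (t 0)) tperm2 mulg1.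
have tzt0 : t z * t 0 \in H by rewrite adj_tpermM_mem //; lia.
have t0tx : t 0 * tperm x (inord z) \in H.
  by rewrite -[_ * _]invgK invMg !tpermV groupV IHd //; lia.
by rewrite groupM // groupM.
Qed.

Lemma Alt_subset_of_adj3 : 'Alt_('I_m.+1) \subset H.
Proof. exact: Alt_subset_of_tpermM tpermM_adj0_mem. Qed.

End AltFromAdjacentThreeCycles.

Lemma modn_lt_double y w : y < w + w -> y %% w = if y < w then y else y - w.
Proof.
move=> lt_y; case: ifP => [lt_yw|/negbT]; first by rewrite modn_small.
by rewrite -leqNgt => /subnK {1}<-; rewrite modnDr modn_small //; lia.
Qed.

Section Crossings.
Variables (m n : nat).
Local Notation pi := (crossing m n).

Lemma crossingE j (x : 'I_m) : j + n <= m ->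
  pi j x = (if j <= x < j + n then 2 * j + n - 1 - x else x) :> nat.
Proof.
move=> jn_m; rewrite permE /cross_fun jn_m andbT; case: ifP => // x_in.
by rewrite val_insubd; case: ifP => // /negbT; lia.
Qed.

Lemma crossing_mem j : 0 < n -> j + n <= m -> pi j \in <<crossings m n>>.
Proof.
move=> n_gt0 jn_m; have lt_jm : j < m by lia.
by apply/mem_gen/imsetP; exists (Ordinal lt_jm); rewrite // inE.
Qed.

Definition window_rot (j d x : nat) :=
  if j <= x <= j + n then j + (x - j + d) %% n.+1 else x.

Lemma window_rotD j d e x :
  window_rot j d (window_rot j e x) = window_rot j (e + d) x.
Proof.
rewrite [window_rot j e x]/window_rot.
case: ifP => x_in; last by rewrite /window_rot x_in.
have := @ltn_pmod (x - j + e) n.+1 (ltn0Sn _).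
by rewrite /window_rot x_in ifT ?addKn ?modnDml ?addnA //; lia.
Qed.

Lemma window_rot_mod j d x : window_rot j (d %% n.+1) x = window_rot j d x.
Proof. by rewrite /window_rot modnDmr. Qed.

End Crossings.

Section CrossingRotations.
Variables (m n : nat).
Hypotheses (n_gt0 : 0 < n) (n_even : ~~ odd n).
Local Notation pi := (crossing m n).
Local Notation window_rot := (window_rot n).

Lemma crossing_pairE j (x : 'I_m) : j.+1 + n <= m ->
  (pi j * pi j.+1) x = window_rot j 2 x :> nat.
Proof.
move=> jn_m; rewrite permM (crossingE _ jn_m) crossingE ?(ltnW jn_m) //.
rewrite /window_rot; case: (boolP (j <= x <= j + n)) => x_in.
  by rewrite modn_lt_double; [repeat case: ifP|]; lia.
by repeat case: ifP; lia.
Qed.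

Lemma crossing_pairXE j e (x : 'I_m) : j.+1 + n <= m ->
  ((pi j * pi j.+1) ^+ e) x = window_rot j (2 * e) x :> nat.
Proof.
move=> jn_m; elim: e => [|e IHe].
  rewrite expg0 perm1 /window_rot muln0 addn0.
  by case: ifP => // ?; rewrite modn_small; lia.
by rewrite expgSr permM crossing_pairE // IHe window_rotD mulnS addnC.
Qed.

(* pi j * pi j.+1 rotates the window [j, j + n] by two; as n + 1 is odd, this
   power of it rotates the window by one. *)
Definition rot j := (pi j * pi j.+1) ^+ n./2.+1.

Lemma rotXE j k (x : 'I_m) : j.+1 + n <= m -> k <= n ->
  (rot j ^+ k) x = (if j <= x <= j + n then
     (if x + k <= j + n then x + k else x + k - n.+1) else x) :> nat.
Proof.
move=> jn_m le_kn; rewrite -expgM crossing_pairXE //.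
have -> : (2 * (n./2.+1 * k) = k * n.+1 + k)%N.
  by have := odd_double_half n; rewrite (negbTE n_even) add0n -muln2; lia.
rewrite -window_rot_mod modnMDl window_rot_mod /window_rot.
case: (boolP (j <= x <= j + n)) => // x_in.
by rewrite modn_lt_double; [repeat case: ifP|]; lia.
Qed.

Lemma rot_mem j : j.+1 + n <= m -> rot j \in <<crossings m n>>.
Proof. by move=> jn_m; rewrite groupX // groupM // crossing_mem // ltnW. Qed.

End CrossingRotations.

Section ThreeCyclesOfCrossings.
Variables (m n : nat).
Hypotheses (n_gt1 : 1 < n) (n_even : ~~ odd n).
Local Notation o i := (inord i : 'I_m.+1).
Local Notation t i := (tperm (o i) (o i.+1)).
Local Notation pi := (crossing m.+1 n).
Local Notation rot := (rot m.+1 n).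
(* With permutations acting left to right, c j is the 3-cycle
   j -> j + n + 1 -> j + n -> j and t k * t k.+1 is k -> k + 2 -> k + 1 -> k. *)
Local Notation c j := (tperm (o j) (o (j + n)) * tperm (o (j + n)) (o (j + n).+1)).

Lemma tperm_inordE a b (x : 'I_m.+1) : a <= m -> b <= m ->
  tperm (o a) (o b) x =
    (if x == a :> nat then b else if x == b :> nat then a else x) :> nat.
Proof.
move=> am bm; have val_eq i : i <= m -> (x == i :> nat) = (x == o i).
  by move=> im; rewrite -val_eqE /= inordK.
rewrite !val_eq //; case: tpermP => [->|->|xa xb]; rewrite ?eqxx ?inordK //.
  by case: eqP => // /(congr1 val); rewrite /= !inordK.
by move: xa xb => /eqP/negbTE-> /eqP/negbTE->.
Qed.

Lemma three_cycle_rotE j : (j + n).+1 <= m -> c j = rot j * rot j.+1 ^+ n.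
Proof.
move=> jn_m; apply/permP => x; apply: val_inj => /=.
rewrite !permM -[rot j]expg1 !tperm_inordE ?rotXE //; try lia.
by repeat (case: ifP => /=); lia.
Qed.

Lemma three_cycle_mem j : (j + n).+1 <= m -> c j \in <<crossings m.+1 n>>.
Proof.
move=> jn_m; rewrite three_cycle_rotE //.
by apply: groupM; last apply: groupX; apply: rot_mem => //; lia.
Qed.

Lemma adj3_rotJ k : (k + n).+1 <= m -> t k * t k.+1 = c k ^ (rot k.+1 ^+ 2).
Proof.
move=> kn_m; apply: conjg_of_mulg_eq.
have := @rotXE m.+1 n (ltnW n_gt1) n_even k.+1 2.
move: (rot k.+1 ^+ 2) => s sE; apply/permP => x; apply: val_inj => /=.
rewrite !permM ?sE ?tperm_inordE ?sE //; try lia.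
by repeat (case: ifP => /=); lia.
Qed.

Lemma adj3_crossingJ k : n <= k.+1 -> k.+2 <= m ->
  t k * t k.+1 = c (k.+1 - n) ^ pi (k.+1 - n).
Proof.
move=> le_nk lt_km; apply: conjg_of_mulg_eq; apply/permP => x; apply: val_inj => /=.
rewrite !permM ?crossingE ?tperm_inordE ?crossingE //; try lia.
by repeat (case: ifP => /=); lia.
Qed.

Lemma adj3_mem_crossings k : n.*2 <= m.+1 -> k.+2 <= m ->
  t k * t k.+1 \in <<crossings m.+1 n>>.
Proof.
move=> le_2n_m lt_km; case: (leqP (k + n).+1 m) => [kn_m|lt_m_kn].
  rewrite adj3_rotJ // groupJ ?three_cycle_mem //.
  by apply: groupX; apply: rot_mem => //; lia.
by rewrite adj3_crossingJ ?groupJ ?three_cycle_mem ?crossing_mem //; lia.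
Qed.

End ThreeCyclesOfCrossings.

Lemma Alt_subset_crossings m n :
  1 < n -> ~~ odd n -> n.*2 <= m -> 'Alt_('I_m) \subset <<crossings m n>>.
Proof.
move=> n_gt1 n_even; case: m => [|m] le_2n_m; first lia.
by apply: Alt_subset_of_adj3 => k; apply: adj3_mem_crossings.
Qed.

Lemma Alt_map_uniq (T : finType) (s a : seq T) :
  size s = size a -> (size a).+2 <= #|T| -> uniq s -> uniq a ->
  exists2 g, g \in 'Alt_T & a = map g s.
Proof.
move=> eq_size le_aT uniq_s uniq_a.
have trans : [transitive^(size a) 'Alt_T, on setT | 'P].
  by apply: ntransitive_weak (Alt_trans T); lia.
have size_s : size s == size a by rewrite eq_size.
have s_dtuple : Tuple size_s \in (size a).-dtuple(setT).
  by rewrite inE uniq_s; apply/subsetP.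
have a_dtuple : in_tuple a \in (size a).-dtuple(setT).
  by rewrite inE uniq_a; apply/subsetP.
have [g gA /(congr1 val) /= ->] := atransP2 trans s_dtuple a_dtuple.
by exists g => //; apply: eq_map => x; rewrite apermE.
Qed.

Lemma cyc_map (T : finType) (g : {perm T}) (s : seq T) : cyc (map g s) = cyc s ^ g.
Proof.
apply/permP => y; rewrite -(permKV g y) permJ !permE /cyc_fun.
rewrite (map_inj_uniq perm_inj); case: ifP => // uniq_s.
by rewrite next_map //; apply: perm_inj.
Qed.

Lemma cycprod_map (T : finType) (g : {perm T}) l (s : seq T) :
  cycprod l (map g s) = cycprod l s ^ g.
Proof.
rewrite /cycprod conjg_prod; apply: eq_bigr => j _.
by rewrite /block -map_drop -map_take cyc_map.
Qed.

Theorem lemma2p5 (n : nat) (l : seq nat) (a : seq 'I_(last 0 l + 3 * n - 3)) :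
  2 <= n -> ~~ odd n ->
  l != [::] -> sorted ltn (0 :: l) ->
  size a = last 0 l -> sorted (fun x y : 'I_(last 0 l + 3 * n - 3) => x < y) a ->
  exists2 g : {perm 'I_(last 0 l + 3 * n - 3)},
    g \in (<<crossings (last 0 l + 3 * n - 3) n>>)%g &
    cycprod l a = (tau (last 0 l + 3 * n - 3) l ^ g)%g.
Proof.
move=> n_gt1 n_even l_nil sorted_l size_a sorted_a.
have last_gt0 : 0 < last 0 l.
  move: sorted_l; rewrite /= (path_sortedE ltn_trans) => /andP[/allP pos_l _].
  by rewrite -nth_last pos_l // mem_nth // ltn_predL lt0n size_eq0.
have uniq_a : uniq a.
  by apply: (sorted_uniq _ _ sorted_a) => [x y z|x]; [apply: ltn_trans | apply: ltnn].
set s := take (last 0 l) (enum 'I_(last 0 l + 3 * n - 3)).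
have size_s : size s = size a.
  by rewrite size_take size_enum_ord size_a; case: ifP => //; lia.
have [|g gA ->] := Alt_map_uniq size_s _ (take_uniq _ (enum_uniq _)) uniq_a.
  by rewrite card_ord size_a; lia.
exists g; last by rewrite /tau cycprod_map.
by apply: subsetP gA; apply: Alt_subset_crossings => //; lia.
Qed.
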